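(* Let $\Gamma=(S,A)$ be a skew-symmetric graph on $S=\{1,\dots,n\}$ and $\varpi$ a weight vector for $\Gamma$. Let $K$ be the Kahan morphism of $\Gamma$ on $\mathbb F(x)$ and $K^\varpi$ the Kahan morphism of $\Gamma^\varpi$ on $\mathbb F(y)$, and let $\Sigma:\mathbb F(x)\to\mathbb F(y)$ be the decloning morphism. Then $K^\varpi\circ\Sigma=\Sigma\circ K$; $\Sigma$ is a morphism of Poisson fields from $(\mathbb F(x),\{\cdot,\cdot\})$ to $(\mathbb F(y),\{\cdot,\cdot\}^\varpi)$; and $K$ is a Poisson morphism if and only if $K^\varpi$ is a Poisson morphism. In particular $\Gamma$ has the Kahan-Poisson property if and only if $\Gamma^\varpi$ does.
   Context: $\mathbb F\in\{\mathbb R,\mathbb C\}$. A skew-symmetric graph is $\Gamma=(S,A)$ with $A=(a_{i,j})$ skew-symmetric over $\mathbb F$. Its Poisson bracket on $\mathbb F(x)=\mathbb F(x_1,\dots,x_n)$ is $\{x_i,x_j\}=a_{i,j}x_ix_j$. Its Kahan morphism (step size 1) is the field endomorphism $K$ with $K(x_i)=\tilde x_i$, the unique solution of $\tilde x_i-x_i=\tilde x_i\sum_j a_{i,j}x_j+x_i\sum_j a_{i,j}\tilde x_j$; $\Gamma$ has the Kahan-Poisson property if $K$ is a Poisson morphism. A weight vector is $\varpi:S\to\mathbb N^*$; the cloning $\Gamma^\varpi$ has vertices $(i,k)$, $i\in S$, $1\le k\le\varpi(i)$, and entries $a^\varpi_{(i,k),(j,\ell)}=a_{i,j}$; its coordinates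 are $y_{i,k}$, $\mathbb F(y)$ is the field of rational functions in all $y_{i,k}$, with Poisson bracket $\{y_{i,k},y_{j,\ell}\}^\varpi=a_{i,j}y_{i,k}y_{j,\ell}$, and its Kahan morphism $K^\varpi$ is defined by the same recipe. The decloning morphism is the field morphism $\Sigma:\mathbb F(x)\to\mathbb F(y)$, $\Sigma(x_i)=\sum_{k=1}^{\varpi(i)}y_{i,k}$. *)

From HB Require Import structures.
From mathcomp Require Import all_boot all_algebra.
From mathcomp Require Import fraction.
From mathcomp Require Import mpoly.

Set Implicit Arguments.
Unset Strict Implicit.
Unset Printing Implicit Defensive.

Import GRing.Theory.
Local Open Scope ring_scope.

(* The field F(x_v : v in V) of rational functions in variables        *)
(* indexed by a finite type V: the fraction field of the multivariate   *)
(* polynomial ring F[x_v], variables numbered through enum_rank.        *)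
Section RatFun.
Variables (F : fieldType) (V : finType).

Definition polV := {mpoly F[#|V|]}.
Definition ratf := {fraction polV}.

Definition var (v : V) : ratf := tofrac ('X_(enum_rank v) : polV).
Definition cst (c : F) : ratf := tofrac (c%:MP : polV).

Definition pderiv_poly (v : V) (p : polV) : polV := mderiv (enum_rank v) p.

(* partial derivative d/dx_v on rational functions, via the quotient rule
   applied to any representative p/q of f (independent of the choice) *)
Definition pderiv (v : V) (f : ratf) : ratf :=
  let r := repr f in
  tofrac (pderiv_poly v (\n_r) * \d_r - \n_r * pderiv_poly v (\d_r))
    / tofrac (\d_r ^+ 2).

(* The log-canonical Poisson bracket of the skew-symmetric matrix a:
   {x_u, x_v} = a u v x_u x_v, extended as a biderivation:
   {f, g} = sum_{u,v} a u v x_u x_v (df/dx_u) (dg/dx_v). *)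
Definition pbracket (a : V -> V -> F) (f g : ratf) : ratf :=
  \sum_(u : V) \sum_(v : V)
     cst (a u v) * var u * var v * pderiv u f * pderiv v g.

(* K is an F-algebra morphism (fixes constants) whose values on the
   generators solve the Kahan equations (step size 1):
   K x_i - x_i = K x_i * sum_j a_ij x_j + x_i * sum_j a_ij K x_j.  *)
Definition is_kahan (a : V -> V -> F) (K : ratf -> ratf) : Prop :=
  (forall c, K (cst c) = cst c) /\
  (forall i : V,
     K (var i) - var i =
       K (var i) * (\sum_(j : V) cst (a i j) * var j)
     + var i * (\sum_(j : V) cst (a i j) * K (var j))).

End RatFun.

Definition poisson_map (F : fieldType) (V W : finType)
  (a : V -> V -> F) (b : W -> W -> F) (phi : ratf F V -> ratf F W) : Prop :=
  forall f g : ratf F V, phi (pbracket a f g) = pbracket b (phi f) (phi g).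

Definition kahan_poisson (F : fieldType) (V : finType) (a : V -> V -> F) : Prop :=
  forall K : {rmorphism ratf F V -> ratf F V},
    is_kahan a K -> poisson_map a a K.

(* Cloning: vertex set {(i,k) | i in 'I_n, k < w i} (k shifted to start at 0) *)
Definition cloneV (n : nat) (w : 'I_n -> nat) : finType := {i : 'I_n & 'I_(w i)}.

Definition mat_fun (F : fieldType) (n : nat) (A : 'M[F]_n) : 'I_n -> 'I_n -> F :=
  fun i j => A i j.

Definition clone_fun (F : fieldType) (n : nat) (A : 'M[F]_n) (w : 'I_n -> nat)
  : cloneV w -> cloneV w -> F :=
  fun u v => A (tag u) (tag v).

Definition is_decloning (F : fieldType) (n : nat) (w : 'I_n -> nat)
  (Sig : ratf F 'I_n -> ratf F (cloneV w)) : Prop :=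
  (forall c, Sig (cst 'I_n c) = cst (cloneV w) c) /\
  (forall i : 'I_n,
     Sig (var F i) = \sum_(k : 'I_(w i)) var F (Tagged (fun j => 'I_(w j)) k : cloneV w)).

Arguments clone_fun {F n} A w _ _.
Arguments mat_fun {F n} A _ _.
Arguments is_decloning {F n w} Sig.
Arguments is_kahan {F V} a K.
Arguments poisson_map {F V W} a b phi.
Arguments kahan_poisson {F V} a.

(* Sigma o K and K^w o Sigma are field morphisms fixing constants, and on the
   generators x_i both solve the decloned Kahan equations; these form a linear
   system whose polynomial matrix is the identity at the origin, hence is
   invertible over F(y), so the two morphisms agree.  Sigma is Poisson because
   d(Sigma h)/dy_(i,k) = Sigma (dh/dx_i) and the cloned matrix only depends on
   the tags.  Solving the Kahan equations gives K x_i = x_i R_i and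
   K^w y_(i,k) = y_(i,k) Sigma R_i; since the bracket of rescaled clone
   coordinates is the decloned image of the bracket of rescaled x-coordinates,
   the Poisson identities of K on the generators carry over to K^w.
   Conversely, Sigma is injective and intertwines K and K^w. *)

From mathcomp Require Import all_boot all_algebra.
From mathcomp Require Import fraction mpoly ring.
Import GRing.Theory.
Local Open Scope ring_scope.

Set Implicit Arguments.
Unset Strict Implicit.
Unset Printing Implicit Defensive.

Lemma frac_numden (R : idomainType) (f : {fraction R}) :
  f = tofrac (\n_(repr f)) / tofrac (\d_(repr f)).
Proof.
have d0 : \d_(repr f) != 0 := denom_ratioP _.
apply: (canRL (mulfK _)); first by rewrite tofrac_eq0.
rewrite -{1}[f]reprK; unlock tofrac.
rewrite -[_ * _]/(FracField.mul _ _) -FracField.pi_mul.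
apply/eqP; rewrite piE /= FracField.equivfE /FracField.mulf /=.
by rewrite !numden_Ratio ?mulf_neq0 ?oner_neq0 // !mulr1 mulrC.
Qed.

Lemma quotient_rule_wd (L : fieldType) (p q n d dp dq dn dd : L) :
  q != 0 -> d != 0 -> p * d = n * q -> dp * d + p * dd = dn * q + n * dq ->
  (dn * d - n * dd) / d ^+ 2 = (dp * q - p * dq) / q ^+ 2.
Proof.
move=> q0 d0 cross dcross.
have ep : p = n * q / d by rewrite -cross mulfK.
have edp : dp = (dn * q + n * dq - p * dd) / d by rewrite -dcross addrK mulfK.
by rewrite edp ep; field; rewrite q0 d0.
Qed.

Lemma quotient_ruleD (L : fieldType) (a b c d da db dc dd : L) : b != 0 -> d != 0 ->
  ((da * d + a * dd + (dc * b + c * db)) * (b * d)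
    - (a * d + c * b) * (db * d + b * dd)) / (b * d) ^+ 2 =
  (da * b - a * db) / b ^+ 2 + (dc * d - c * dd) / d ^+ 2.
Proof. by move=> b0 d0; field; rewrite b0 d0. Qed.

Lemma quotient_ruleM (L : fieldType) (a b c d da db dc dd : L) : b != 0 -> d != 0 ->
  ((da * c + a * dc) * (b * d) - a * c * (db * d + b * dd)) / (b * d) ^+ 2 =
  a / b * ((dc * d - c * dd) / d ^+ 2) + (da * b - a * db) / b ^+ 2 * (c / d).
Proof. by move=> b0 d0; field; rewrite b0 d0. Qed.

Section RationalCalculus.
Variables (F : fieldType) (V : finType).
Local Notation R := (ratf F V).
Local Notation P := (polV F V).

Lemma ratf_frac (f : R) : exists p q : P, q != 0 /\ f = tofrac p / tofrac q.
Proof.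
by exists \n_(repr f), \d_(repr f); split; [exact: denom_ratioP | exact: frac_numden].
Qed.

Lemma pderiv_frac (v : V) (p q : P) : q != 0 ->
  pderiv v (tofrac p / tofrac q) =
  (tofrac (pderiv_poly v p) * tofrac q - tofrac p * tofrac (pderiv_poly v q))
    / tofrac q ^+ 2.
Proof.
move=> q0; rewrite /pderiv /=; set r := repr _.
have d0 : \d_r != 0 := denom_ratioP r.
have cross : p * \d_r = \n_r * q.
  apply/eqP; rewrite -tofrac_eq !tofracM -eqr_div ?tofrac_eq0 //.
  by apply/eqP; exact: frac_numden.
have dcross := congr1 (fun p => tofrac (pderiv_poly v p) : R) cross.
rewrite /pderiv_poly !mderivM !tofracD !tofracM in dcross.
rewrite tofracB !tofracM -expr2.
apply: quotient_rule_wd dcross; rewrite ?tofrac_eq0 //.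
by rewrite -!tofracM cross.
Qed.

Lemma pderiv_tofrac (v : V) (p : P) :
  pderiv v (tofrac p) = tofrac (pderiv_poly v p).
Proof.
rewrite -[tofrac p]divr1 -tofrac1 pderiv_frac ?oner_neq0 //.
rewrite /pderiv_poly -[1 : P]/(1%:MP) mderivC tofrac0 tofrac1.
by rewrite mulr0 subr0 expr1n !mulr1 divr1.
Qed.

Lemma pderivD (v : V) (f g : R) : pderiv v (f + g) = pderiv v f + pderiv v g.
Proof.
have [p1 [q1 [q10 ->]]] := ratf_frac f; have [p2 [q2 [q20 ->]]] := ratf_frac g.
rewrite addf_div ?tofrac_eq0 // -!tofracM -tofracD !pderiv_frac ?mulf_neq0 //.
rewrite /pderiv_poly !mderivD !mderivM !tofracD !tofracM.
by apply: quotient_ruleD; rewrite tofrac_eq0.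
Qed.

Lemma pderivM (v : V) (f g : R) :
  pderiv v (f * g) = f * pderiv v g + pderiv v f * g.
Proof.
have [p1 [q1 [q10 ->]]] := ratf_frac f; have [p2 [q2 [q20 ->]]] := ratf_frac g.
rewrite mulf_div -!tofracM !pderiv_frac ?mulf_neq0 //.
rewrite /pderiv_poly !mderivM !tofracD !tofracM.
by apply: quotient_ruleM; rewrite tofrac_eq0.
Qed.

Lemma pderiv0 (v : V) : pderiv v (0 : R) = 0.
Proof. by rewrite -tofrac0 pderiv_tofrac /pderiv_poly mderiv0 tofrac0. Qed.

Lemma pderiv_sum (v : V) (I : finType) (f : I -> R) :
  pderiv v (\sum_i f i) = \sum_i pderiv v (f i).
Proof. exact: (big_morph (pderiv v) (pderivD v) (pderiv0 v)). Qed.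

Lemma pderiv_cst (v : V) (c : F) : pderiv v (cst V c) = 0.
Proof. by rewrite /cst pderiv_tofrac /pderiv_poly mderivC tofrac0. Qed.

Lemma pderiv_var (v u : V) : pderiv v (var F u) = (u == v)%:R.
Proof.
rewrite /var pderiv_tofrac /pderiv_poly mderivX mnm1E (inj_eq enum_rank_inj).
have [->|_] := eqP; last by rewrite scale0r tofrac0.
have -> : (U_(enum_rank v) - U_(enum_rank v))%MM = 0%MM.
  by apply/mnmP => k; rewrite mnmBE subnn mnm0E.
by rewrite mpolyX0 scale1r tofrac1.
Qed.

Lemma var_neq0 (v : V) : var F v != 0.
Proof.
rewrite /var tofrac_eq0; apply/eqP => /(congr1 (mcoeff U_(enum_rank v))).
by rewrite mcoeffX eqxx mcoeff0 => /eqP; rewrite oner_eq0.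
Qed.

Lemma ratf_poly_ind (Q : R -> Prop) :
  (forall c, Q (cst V c)) -> (forall v, Q (var F v)) ->
  (forall f g, Q f -> Q g -> Q (f + g)) ->
  (forall f g, Q f -> Q g -> Q (f * g)) -> forall p : P, Q (tofrac p).
Proof.
move=> Qcst Qvar QD QM.
have Q1 : Q 1 by rewrite -tofrac1 -mpolyC1; exact: Qcst.
have QX f k : Q f -> Q (f ^+ k).
  by move=> Qf; elim: k => [|k Qk]; rewrite ?expr0 // exprS; exact: QM.
elim/mpolyind => [|c m p _ _ Qp]; first by rewrite -mpolyC0; exact: Qcst.
rewrite tofracD -mul_mpolyC tofracM; apply: (QD) => //; apply: (QM); first exact: Qcst.
rewrite mpolyXE_id rmorph_prod; apply: (big_ind Q) => // i _.
by rewrite rmorphXn; apply: (QX); have := Qvar (enum_val i); rewrite /var enum_valK.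
Qed.

Lemma ratf_morph_ext (L : fieldType) (phi psi : {rmorphism R -> L}) :
  (forall c, phi (cst V c) = psi (cst V c)) ->
  (forall v, phi (var F v) = psi (var F v)) -> phi =1 psi.
Proof.
move=> eq_cst eq_var.
have eq_poly : forall p, phi (tofrac p) = psi (tofrac p).
  apply: (ratf_poly_ind (Q := fun f => phi f = psi f)) => // f g eq_f eq_g;
    by rewrite /= ?rmorphD ?rmorphM eq_f eq_g.
by move=> f; have [p [q [_ ->]]] := ratf_frac f; rewrite !fmorph_div !eq_poly.
Qed.

End RationalCalculus.

Section ChainRule.
Variables (F : fieldType) (V W : finType).
Variable phi : {rmorphism ratf F V -> ratf F W}.
Hypothesis phi_cst : forall c, phi (cst V c) = cst W c.

(* The defect of the chain rule is a derivation along phi vanishing on the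
   generators, hence on polynomials, hence everywhere. *)
Let defect (w : W) (f : ratf F V) : ratf F W :=
  pderiv w (phi f) - \sum_v phi (pderiv v f) * pderiv w (phi (var F v)).

Let defectD w f g : defect w (f + g) = defect w f + defect w g.
Proof.
rewrite /defect rmorphD pderivD.
under eq_bigr do rewrite pderivD rmorphD mulrDl.
by rewrite big_split /= opprD addrACA.
Qed.

Let defectM w f g : defect w (f * g) = phi f * defect w g + phi g * defect w f.
Proof.
rewrite /defect (rmorphM phi f g) pderivM.
under eq_bigr => v _ do
  rewrite pderivM rmorphD (rmorphM phi f) (rmorphM phi _ g) mulrDl -mulrA mulrAC.
by rewrite big_split /= -mulr_sumr -mulr_suml; ring.
Qed.

Let defect_poly w p : defect w (tofrac p) = 0.
Proof.
move: p; apply: (ratf_poly_ind (Q := fun f => defect w f = 0)).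
- move=> c; rewrite /defect phi_cst pderiv_cst big1 ?subr0 // => v _.
  by rewrite pderiv_cst rmorph0 mul0r.
- move=> u; rewrite /defect (bigD1 u) //= pderiv_var eqxx rmorph1 mul1r.
  rewrite big1 ?addr0 ?subrr // => v vu.
  by rewrite pderiv_var eq_sym (negbTE vu) rmorph0 mul0r.
- by move=> f g ef eg; rewrite /= defectD ef eg addr0.
- by move=> f g ef eg; rewrite /= defectM ef eg !mulr0 addr0.
Qed.

Lemma pderiv_rmorph (w : W) (f : ratf F V) :
  pderiv w (phi f) = \sum_v phi (pderiv v f) * pderiv w (phi (var F v)).
Proof.
apply/eqP; rewrite -subr_eq0 -/(defect w f); apply/eqP.
have [p [q [q0 ef]]] := ratf_frac f.
have ep : tofrac p = f * tofrac q by rewrite ef divfK ?tofrac_eq0.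
have := defect_poly w p; rewrite ep defectM defect_poly mulr0 add0r => /eqP.
by rewrite mulf_eq0 fmorph_eq0 tofrac_eq0 (negbTE q0) => /eqP.
Qed.

End ChainRule.

Section Bracket.
Variables (F : fieldType) (V : finType) (a : V -> V -> F).
Local Notation R := (ratf F V).
Local Notation x := (var F).

Lemma pbracket_var_l (i : V) (h : R) :
  pbracket a (x i) h = x i * \sum_j cst V (a i j) * x j * pderiv j h.
Proof.
rewrite /pbracket (bigD1 i) //= [X in _ + X]big1 ?addr0 => [|u ui]; last first.
  by apply: big1 => v _; rewrite pderiv_var eq_sym (negbTE ui) mulr0 mul0r.
by rewrite mulr_sumr; apply: eq_bigr => v _; rewrite pderiv_var eqxx mulr1; ring.
Qed.

Lemma pbracket_var_r (j : V) (h : R) :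
  pbracket a h (x j) = x j * \sum_u cst V (a u j) * x u * pderiv u h.
Proof.
rewrite /pbracket mulr_sumr; apply: eq_bigr => u _.
rewrite (bigD1 j) //= big1 ?addr0 => [|v vj]; last first.
  by rewrite pderiv_var eq_sym (negbTE vj) mulr0.
by rewrite pderiv_var eqxx mulr1; ring.
Qed.

Lemma pbracket_var (u v : V) : pbracket a (x u) (x v) = cst V (a u v) * x u * x v.
Proof.
rewrite pbracket_var_l (bigD1 v) //= big1 ?addr0 => [|j jv]; last first.
  by rewrite pderiv_var eq_sym (negbTE jv) mulr0.
by rewrite pderiv_var eqxx mulr1; ring.
Qed.

Lemma pbracketDl (f1 f2 g : R) :
  pbracket a (f1 + f2) g = pbracket a f1 g + pbracket a f2 g.
Proof.
rewrite /pbracket -big_split; apply: eq_bigr => u _.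
by rewrite -big_split; apply: eq_bigr => v _; rewrite pderivD mulrDr mulrDl.
Qed.

Lemma pbracketDr (f g1 g2 : R) :
  pbracket a f (g1 + g2) = pbracket a f g1 + pbracket a f g2.
Proof.
rewrite /pbracket -big_split; apply: eq_bigr => u _.
by rewrite -big_split; apply: eq_bigr => v _; rewrite pderivD mulrDr.
Qed.

Lemma pbracketMl (f1 f2 g : R) :
  pbracket a (f1 * f2) g = f1 * pbracket a f2 g + f2 * pbracket a f1 g.
Proof.
rewrite /pbracket !mulr_sumr -big_split; apply: eq_bigr => u _.
rewrite !mulr_sumr -big_split; apply: eq_bigr => v _ /=.
by rewrite pderivM; ring.
Qed.

Lemma pbracketMr (f g1 g2 : R) :
  pbracket a f (g1 * g2) = g1 * pbracket a f g2 + g2 * pbracket a f g1.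
Proof.
rewrite /pbracket !mulr_sumr -big_split; apply: eq_bigr => u _.
rewrite !mulr_sumr -big_split; apply: eq_bigr => v _ /=.
by rewrite pderivM; ring.
Qed.

Lemma pbracket_mul_mul (u f v g : R) :
  pbracket a (u * f) (v * g) =
  u * v * pbracket a f g + u * g * pbracket a f v
  + f * v * pbracket a u g + f * g * pbracket a u v.
Proof. by rewrite pbracketMl !pbracketMr; ring. Qed.

Lemma pbracket0l (g : R) : pbracket a 0 g = 0.
Proof.
by rewrite /pbracket big1 // => u _; rewrite big1 // => v _; rewrite pderiv0 mulr0 mul0r.
Qed.

Lemma pbracket0r (f : R) : pbracket a f 0 = 0.
Proof. by rewrite /pbracket big1 // => u _; rewrite big1 // => v _; rewrite pderiv0 mulr0. Qed.

Lemma pbracket_suml (I : finType) (f : I -> R) (g : R) :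
  pbracket a (\sum_i f i) g = \sum_i pbracket a (f i) g.
Proof.
exact: (big_morph (pbracket a^~ g) (fun f1 f2 => pbracketDl f1 f2 g) (pbracket0l g)).
Qed.

Lemma pbracket_sumr (I : finType) (f : R) (g : I -> R) :
  pbracket a f (\sum_i g i) = \sum_i pbracket a f (g i).
Proof. exact: (big_morph (pbracket a f) (pbracketDr f) (pbracket0r f)). Qed.

End Bracket.

Section PoissonMorphism.
Variables (F : fieldType) (V W : finType) (a : V -> V -> F) (b : W -> W -> F).

Lemma pbracket_chain (U : finType) (y al be : U -> ratf F W) (f g : ratf F W) :
  (forall s, pderiv s f = \sum_u al u * pderiv s (y u)) ->
  (forall t, pderiv t g = \sum_v be v * pderiv t (y v)) ->
  pbracket b f g = \sum_u \sum_v al u * be v * pbracket b (y u) (y v).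
Proof.
move=> df dg; rewrite /pbracket.
have sum_mul2 (c : ratf F W) (A B : U -> ratf F W) :
    c * (\sum_u A u) * (\sum_v B v) = \sum_u \sum_v c * A u * B v.
  by rewrite [c * _]mulr_sumr mulr_suml; apply: eq_bigr => u _; rewrite mulr_sumr.
under eq_bigr => s _ do under eq_bigr => t _ do rewrite df dg sum_mul2.
under eq_bigr => s _ do rewrite exchange_big.
under eq_bigr => s _ do under eq_bigr => u _ do rewrite exchange_big.
rewrite exchange_big; apply: eq_bigr => u _.
rewrite exchange_big; apply: eq_bigr => v _.
rewrite mulr_sumr; apply: eq_bigr => s _.
by rewrite mulr_sumr; apply: eq_bigr => t _; ring.
Qed.

Lemma poisson_map_var (phi : {rmorphism ratf F V -> ratf F W}) :
  (forall c, phi (cst V c) = cst W c) ->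
  (forall u v, pbracket b (phi (var F u)) (phi (var F v)) =
               phi (cst V (a u v) * var F u * var F v)) ->
  poisson_map a b phi.
Proof.
move=> phi_cst phi_var f g.
rewrite (@pbracket_chain V (fun u => phi (var F u))
     (fun u => phi (pderiv u f)) (fun u => phi (pderiv u g))); last first.
- by move=> t; rewrite pderiv_rmorph.
- by move=> s; rewrite pderiv_rmorph.
rewrite {1}/pbracket rmorph_sum; apply: eq_bigr => u _.
rewrite rmorph_sum; apply: eq_bigr => v _.
by rewrite /= phi_var !rmorphM; ring.
Qed.

End PoissonMorphism.

Lemma unitmx_tofrac_const1 (F : fieldType) (k m : nat) (M : 'M[{mpoly F[k]}]_m) :
  map_mx (mcoeff 0) M = 1%:M -> map_mx (@tofrac _) M \in unitmx.
Proof.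
move=> M01; rewrite unitmxE unitfE (det_map_mx (@tofrac {mpoly F[k]})) tofrac_eq0.
apply: contraTneq isT => detM0.
have := det_map_mx (mcoeff 0 : {rmorphism {mpoly F[k]} -> F}) M.
by rewrite M01 det1 detM0 rmorph0 => /eqP; rewrite oner_eq0.
Qed.

Section KahanSystem.
Variables (F : fieldType) (V : finType).
Local Notation R := (ratf F V).

Definition vanishing_at0 (f : R) := exists2 p : polV F V, f = tofrac p & mcoeff 0 p = 0.

Lemma vanishing_at0_var v : vanishing_at0 (var F v).
Proof. by exists ('X_(enum_rank v)); rewrite // mcoeffX mnm1_eq0. Qed.

Lemma vanishing_at0_sum (I : finType) (f : I -> R) :
  (forall i, vanishing_at0 (f i)) -> vanishing_at0 (\sum_i f i).
Proof.
move=> f0; apply: big_ind => // [|g h [p -> p0] [q -> q0]].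
  by exists 0; rewrite ?tofrac0 ?mcoeff0.
by exists (p + q); rewrite ?tofracD // mcoeffD p0 q0 addr0.
Qed.

Lemma vanishing_at0_cstM c f : vanishing_at0 f -> vanishing_at0 (cst V c * f).
Proof. by case=> p -> p0; exists (c%:MP * p); rewrite ?tofracM // mcoeffCM p0 mulr0. Qed.

Lemma vanishing_at0_oneB_neq0 f : vanishing_at0 f -> 1 - f != 0.
Proof.
case=> p -> p0; rewrite -tofrac1 -tofracB tofrac_eq0.
apply: contraTneq isT => /(congr1 (mcoeff 0)).
by rewrite mcoeffB mcoeff1 eqxx p0 subr0 mcoeff0 => /eqP; rewrite oner_eq0.
Qed.

(* The linear system satisfied by the values of a Kahan map on the generators
   reduces to the identity at the origin, hence has at most one solution. *)
Lemma kahan_system_uniq (m : nat) (c : 'I_m -> 'I_m -> F) (X T D E : 'I_m -> R) :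
  (forall i, vanishing_at0 (X i)) -> (forall i, vanishing_at0 (T i)) ->
  (forall i, D i - X i = D i * T i + X i * \sum_j cst V (c i j) * D j) ->
  (forall i, E i - X i = E i * T i + X i * \sum_j cst V (c i j) * E j) ->
  D =1 E.
Proof.
move=> /fin_all_exists2[p eX p0] /fin_all_exists2[q eT q0] eD eE.
pose M := \matrix_(i, j) ((i == j)%:R * (1 - q i) - p i * (c i j)%:MP).
have M01 : map_mx (mcoeff 0) M = 1%:M.
  apply/matrixP => i j; rewrite !mxE rmorphB !rmorphM rmorphB /= p0 q0.
  by rewrite rmorph1 rmorph_nat mul0r !subr0 mulr1.
pose DE : 'cV[R]_m := \col_i (D i - E i).
have MDE : map_mx (@tofrac _) M *m DE = 0.
  apply/matrixP => i k; rewrite !mxE.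
  under eq_bigr => j _ do
    rewrite !mxE tofracB !tofracM tofracB tofrac1 rmorph_nat mulrBl.
  rewrite sumrB (bigD1 i) //= eqxx mul1r big1 ?addr0 => [|j ji]; last first.
    by rewrite eq_sym (negbTE ji) !mul0r.
  rewrite -eX -eT.
  set SD := \sum_j cst V (c i j) * D j; set SE := \sum_j cst V (c i j) * E j.
  have -> : \sum_j X i * cst V (c i j) * (D j - E j) = X i * (SD - SE).
    by rewrite -sumrB mulr_sumr; apply: eq_bigr => j _; ring.
  have -> : (1 - T i) * (D i - E i) - X i * (SD - SE) =
      (D i - X i - (D i * T i + X i * SD)) - (E i - X i - (E i * T i + X i * SE)).
    by ring.
  by rewrite eD eE !subrr.
move=> i; have := congr1 (mulmx (invmx (map_mx (@tofrac _) M))) MDE.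
rewrite mulKmx ?unitmx_tofrac_const1 // mulmx0 => /matrixP /(_ i ord0).
by rewrite !mxE => /eqP; rewrite subr_eq0 => /eqP.
Qed.

Definition kahan_lin (a : V -> V -> F) (i : V) : R := \sum_j cst V (a i j) * var F j.

Lemma vanishing_at0_kahan_lin (a : V -> V -> F) i : vanishing_at0 (kahan_lin a i).
Proof. by apply: vanishing_at0_sum => j; apply/vanishing_at0_cstM/vanishing_at0_var. Qed.

End KahanSystem.

Lemma kahan_eq_solve (L : fieldType) (k x S B : L) :
  1 - S != 0 -> k - x = k * S + x * B -> k = x * ((1 + B) / (1 - S)).
Proof.
move=> S1 kE; rewrite mulrA; apply: (canRL (mulfK S1)); apply/eqP.
rewrite -subr_eq0; apply/eqP; transitivity (k - x - (k * S + x * B)); first by ring.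
by rewrite kE subrr.
Qed.

Lemma scaled_bracket_expand (L : fieldType) (u v f g B Pf Pg c : L) :
  u != 0 -> v != 0 ->
  (u * v * B + u * g * Pf + f * v * Pg + f * g * (c * u * v)) / (u * v) =
  B + g * (Pf / v) + f * (Pg / u) + c * f * g.
Proof. by move=> u0 v0; field; rewrite u0 v0. Qed.

Lemma scaled_product_divK (L : fieldType) (c u v f g : L) :
  u != 0 -> v != 0 -> c * (u * f) * (v * g) / (u * v) = c * f * g.
Proof. by move=> u0 v0; field; rewrite u0 v0. Qed.

Section Decloning.
Variables (F : fieldType) (n : nat) (A : 'M[F]_n) (w : 'I_n -> nat).
Local Notation C := (cloneV w).
Local Notation RI := (ratf F 'I_n).
Local Notation RC := (ratf F C).
Local Notation clone k := (Tagged (fun j => 'I_(w j)) k : C).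
Local Notation x := (var F).
Local Notation S := (kahan_lin (mat_fun A)).

Lemma big_cloneV (M : nmodType) (G : C -> M) :
  \sum_t G t = \sum_i \sum_(k : 'I_(w i)) G (clone k).
Proof.
rewrite (sig_big_dep xpredT (fun _ => xpredT) (fun i (k : 'I_(w i)) => G (clone k))) /=.
by apply: eq_bigr => t _; rewrite taggedK.
Qed.

Lemma big_clone_tag (M : nmodType) (i : 'I_n) (G : C -> M) :
  \sum_(k : 'I_(w i)) G (clone k) = \sum_(t | tag t == i) G t.
Proof.
rewrite [RHS]big_mkcond [RHS]big_cloneV (bigD1 i) //= [X in _ + X]big1 ?addr0 => [|j ji].
  by apply: eq_bigr => k _; rewrite eqxx.
by apply: big1 => k _ /=; rewrite (negbTE ji).
Qed.

Variable Sig : {rmorphism RI -> RC}.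
Hypothesis Sig_decloning : is_decloning Sig.

Lemma decloning_cst c : Sig (cst 'I_n c) = cst C c.
Proof. by case: Sig_decloning. Qed.

Lemma decloning_var i : Sig (x i) = \sum_(k : 'I_(w i)) x (clone k).
Proof. by case: Sig_decloning. Qed.

Lemma pderiv_decloning_var (t : C) (i : 'I_n) :
  pderiv t (Sig (x i)) = (tag t == i)%:R.
Proof.
rewrite decloning_var pderiv_sum.
under eq_bigr do rewrite pderiv_var.
rewrite (big_clone_tag i (fun s => (s == t)%:R)).
have [ti|ti] := eqVneq (tag t) i.
  by rewrite (bigD1 t) ?ti //= eqxx big1 ?addr0 // => s /andP[_ /negbTE ->].
by apply: big1 => s si; case: eqP => // st; rewrite -st si in ti.
Qed.

Lemma pderiv_decloning (t : C) (h : RI) : pderiv t (Sig h) = Sig (pderiv (tag t) h).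
Proof.
rewrite (pderiv_rmorph decloning_cst); under eq_bigr do rewrite pderiv_decloning_var.
rewrite (bigD1 (tag t)) //= eqxx mulr1 big1 ?addr0 // => i ti.
by rewrite eq_sym (negbTE ti) mulr0.
Qed.

Lemma decloning_pbracket_var_l (s : C) (h : RI) :
  pbracket (clone_fun A w) (x s) (Sig h) =
  x s * Sig (pbracket (mat_fun A) (x (tag s)) h / x (tag s)).
Proof.
rewrite !pbracket_var_l [x (tag s) * _]mulrC mulfK ?var_neq0 //.
rewrite big_cloneV rmorph_sum; congr (_ * _).
apply: eq_bigr => j _; rewrite 2!rmorphM /= decloning_cst decloning_var.
by rewrite mulr_sumr mulr_suml; apply: eq_bigr => k _; rewrite pderiv_decloning.
Qed.

Lemma decloning_pbracket_var_r (t : C) (h : RI) :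
  pbracket (clone_fun A w) (Sig h) (x t) =
  x t * Sig (pbracket (mat_fun A) h (x (tag t)) / x (tag t)).
Proof.
rewrite !pbracket_var_r [x (tag t) * _]mulrC mulfK ?var_neq0 //.
rewrite big_cloneV rmorph_sum; congr (_ * _).
apply: eq_bigr => j _; rewrite 2!rmorphM /= decloning_cst decloning_var.
by rewrite mulr_sumr mulr_suml; apply: eq_bigr => k _; rewrite pderiv_decloning.
Qed.

Lemma decloning_poisson : poisson_map (mat_fun A) (clone_fun A w) Sig.
Proof.
apply: poisson_map_var => [|u v]; first exact: decloning_cst.
rewrite !rmorphM /= decloning_cst !decloning_var pbracket_suml.
rewrite [cst _ _ * _]mulr_sumr mulr_suml; apply: eq_bigr => k _.
by rewrite pbracket_sumr mulr_sumr; apply: eq_bigr => l _; rewrite pbracket_var.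
Qed.

Lemma pbracket_decloning_scaled (s t : C) (f g : RI) :
  pbracket (clone_fun A w) (x s * Sig f) (x t * Sig g) =
  x s * x t * Sig (pbracket (mat_fun A) (x (tag s) * f) (x (tag t) * g)
                   / (x (tag s) * x (tag t))).
Proof.
rewrite !pbracket_mul_mul !pbracket_var scaled_bracket_expand ?var_neq0 //.
rewrite decloning_pbracket_var_l decloning_pbracket_var_r -decloning_poisson.
by rewrite !rmorphD !rmorphM /= decloning_cst; ring.
Qed.

Lemma decloning_kahan_lin (s : C) :
  kahan_lin (clone_fun A w) s = Sig (S (tag s)).
Proof.
rewrite /kahan_lin rmorph_sum big_cloneV; apply: eq_bigr => j _.
by rewrite rmorphM /= decloning_cst decloning_var mulr_sumr.
Qed.

Variables (K : {rmorphism RI -> RI}) (Kw : {rmorphism RC -> RC}).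
Hypothesis K_kahan : is_kahan (mat_fun A) K.
Hypothesis Kw_kahan : is_kahan (clone_fun A w) Kw.

Lemma kahan_clone_var (s : C) :
  Kw (x s) - x s = Kw (x s) * Sig (S (tag s))
    + x s * \sum_j cst C (A (tag s) j) * Kw (Sig (x j)).
Proof.
case: Kw_kahan => _ ->; rewrite -decloning_kahan_lin; congr (_ + _ * _).
rewrite big_cloneV; apply: eq_bigr => j _.
by rewrite decloning_var rmorph_sum mulr_sumr.
Qed.

Lemma kahan_decloning_var (i : 'I_n) :
  Kw (Sig (x i)) - Sig (x i) = Kw (Sig (x i)) * Sig (S i)
    + Sig (x i) * \sum_j cst C (A i j) * Kw (Sig (x j)).
Proof.
rewrite decloning_var rmorph_sum -sumrB.
under eq_bigr do rewrite kahan_clone_var /=.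
by rewrite big_split /= -!mulr_suml.
Qed.

Lemma decloning_kahan_var (i : 'I_n) :
  Sig (K (x i)) - Sig (x i) = Sig (K (x i)) * Sig (S i)
    + Sig (x i) * \sum_j cst C (A i j) * Sig (K (x j)).
Proof.
case: K_kahan => _ /(_ i) /(congr1 Sig); rewrite rmorphB rmorphD !rmorphM => ->.
congr (_ + _ * _); rewrite rmorph_sum; apply: eq_bigr => j _.
by rewrite rmorphM /= decloning_cst.
Qed.

Lemma kahan_decloning f : Kw (Sig f) = Sig (K f).
Proof.
apply: (@ratf_morph_ext _ _ _ (Kw \o Sig) (Sig \o K)) => [c|i] /=.
  by case: K_kahan Kw_kahan => K_cst _ [Kw_cst _]; rewrite K_cst !decloning_cst Kw_cst.
have vanishing_Sig_var j : vanishing_at0 (Sig (x j)).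
  by rewrite decloning_var; apply: vanishing_at0_sum => k; exact: vanishing_at0_var.
move: i; apply: (kahan_system_uniq (c := fun i j => A i j)
  (X := fun i => Sig (x i)) (T := fun i => Sig (S i))
  (D := fun i => Kw (Sig (x i))) (E := fun i => Sig (K (x i)))) => // j.
- rewrite /kahan_lin rmorph_sum; apply: vanishing_at0_sum => l.
  by rewrite rmorphM /= decloning_cst; exact: vanishing_at0_cstM.
- exact: kahan_decloning_var.
- exact: decloning_kahan_var.
Qed.

Definition kahan_ratio (i : 'I_n) : RI :=
  (1 + \sum_j cst 'I_n (A i j) * K (x j)) / (1 - S i).

Lemma kahan_var (i : 'I_n) : K (x i) = x i * kahan_ratio i.
Proof.
apply: kahan_eq_solve; first exact/vanishing_at0_oneB_neq0/vanishing_at0_kahan_lin.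
by case: K_kahan => _ ->.
Qed.

Lemma kahan_clone_var_ratio (s : C) : Kw (x s) = x s * Sig (kahan_ratio (tag s)).
Proof.
rewrite fmorph_div rmorphD rmorphB rmorph1; apply: kahan_eq_solve.
  rewrite -(rmorph1 Sig) -rmorphB fmorph_eq0.
  exact/vanishing_at0_oneB_neq0/vanishing_at0_kahan_lin.
rewrite kahan_clone_var; congr (_ + _ * _).
rewrite rmorph_sum; apply: eq_bigr => j _.
by rewrite kahan_decloning rmorphM /= decloning_cst.
Qed.

(* Kw y_s / y_s is the decloned image of K x_i / x_i for i = tag s, so the
   Poisson identities of K on the generators transfer through
   pbracket_decloning_scaled. *)
Lemma kahan_poisson_clone :
  poisson_map (mat_fun A) (mat_fun A) K -> poisson_map (clone_fun A w) (clone_fun A w) Kw.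
Proof.
move=> K_poisson; case: Kw_kahan => Kw_cst _; apply: poisson_map_var => // s t.
rewrite !kahan_clone_var_ratio pbracket_decloning_scaled.
rewrite -!kahan_var -K_poisson pbracket_var !(rmorphM K).
case: K_kahan => -> _; rewrite !kahan_var scaled_product_divK ?var_neq0 //.
rewrite (rmorphM Sig (_ * kahan_ratio _)) (rmorphM Sig (cst _ _)) decloning_cst.
by rewrite !(rmorphM Kw) Kw_cst !kahan_clone_var_ratio; ring.
Qed.

Lemma kahan_poisson_declone :
  poisson_map (clone_fun A w) (clone_fun A w) Kw -> poisson_map (mat_fun A) (mat_fun A) K.
Proof.
move=> Kw_poisson f g; apply: (fmorph_inj Sig).
by rewrite -kahan_decloning !decloning_poisson Kw_poisson !kahan_decloning.
Qed.

End Decloning.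

Theorem proposition2p3 (F : numFieldType) (n : nat) (A : 'M[F]_n)
  (w : 'I_n -> nat)
  (K : {rmorphism ratf F 'I_n -> ratf F 'I_n})
  (Kw : {rmorphism ratf F (cloneV w) -> ratf F (cloneV w)})
  (Sig : {rmorphism ratf F 'I_n -> ratf F (cloneV w)}) :
  A^T = - A ->
  (forall i, (0 < w i)%N) ->
  is_kahan (mat_fun A) K ->
  is_kahan (clone_fun A w) Kw ->
  is_decloning Sig ->
  [/\ (forall f, Kw (Sig f) = Sig (K f)),
      poisson_map (mat_fun A) (clone_fun A w) Sig,
      (poisson_map (mat_fun A) (mat_fun A) K <->
       poisson_map (clone_fun A w) (clone_fun A w) Kw)
    & (kahan_poisson (mat_fun A) <-> kahan_poisson (clone_fun A w))].
Proof.
move=> _ _ K_kahan Kw_kahan Sig_decloning.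
have KwSig := kahan_decloning Sig_decloning K_kahan Kw_kahan.
have clone_of_K := kahan_poisson_clone Sig_decloning.
have K_of_clone := kahan_poisson_declone Sig_decloning.
split; [exact: KwSig | exact: decloning_poisson Sig_decloning | split | split].
- exact: clone_of_K K_kahan Kw_kahan.
- exact: K_of_clone K_kahan Kw_kahan.
- by move=> K_kp K' K'_kahan; apply: clone_of_K K_kahan K'_kahan (K_kp K K_kahan).
- by move=> Kw_kp K' K'_kahan; apply: K_of_clone K'_kahan Kw_kahan (Kw_kp Kw Kw_kahan).
Qed.
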